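(* For every bipartite state $\rho$ on $\mathcal{H}^A\otimes\mathcal{H}^B$ ($\dim\mathcal{H}^A=m$, $\dim\mathcal{H}^B=n$), the geometric discord satisfies $$D_G(\rho)=\frac{2}{m^2n}\Big[\mathrm{Tr}\,G-\max_{\{|k\rangle\}}\sum_{k=1}^m\vec{\mu}_k^{\mathrm t}G\vec{\mu}_k\Big],$$ where $G=\vec{x}\vec{x}^{\mathrm t}+\frac{2}{n}TT^{\mathrm t}$, the maximum is over all orthonormal bases $\{|k\rangle\}_{k=1}^m$ of $\mathcal{H}^A$, and $\vec{\mu}_k=\frac{\sqrt2}{m}\vec{\alpha}_k$ with $\vec{\alpha}_k\in\mathbb{R}^{m^2-1}$ the coherence vector of $|k\rangle\langle k|$, i.e. $|k\rangle\langle k|=\frac1m(\mathbb{I}+\vec{\alpha}_k\cdot\hat\lambda^A)$. In particular $D_G$ does not depend on the coherence vector $\vec{y}$ of $B$.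
   Context: Generators $\hat\lambda_i^A$ ($i=1,\dots,m^2-1$) of $SU(m)$ and $\hat\lambda_j^B$ of $SU(n)$ are Hermitian, traceless, with $\mathrm{Tr}(\hat\lambda_i\hat\lambda_j)=2\delta_{ij}$. For $\rho$, $x_i=\frac{m}{2}\mathrm{Tr}[(\hat\lambda_i^A\otimes\mathbb{I})\rho]$, $y_j=\frac{n}{2}\mathrm{Tr}[(\mathbb{I}\otimes\hat\lambda_j^B)\rho]$, $t_{ij}=\frac{mn}{4}\mathrm{Tr}[(\hat\lambda_i^A\otimes\hat\lambda_j^B)\rho]$, $T=(t_{ij})$. The geometric discord is $D_G(\rho)=\min_\chi\mathrm{Tr}(\rho-\chi)^2$ over zero-discord states $\chi=\sum_{k=1}^m p_k|k\rangle\langle k|\otimes\rho_k^B$ ($\{|k\rangle\}$ orthonormal basis of $\mathcal{H}^A$, $p_k$ probabilities, $\rho_k^B$ states on $\mathcal{H}^B$). *)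

From HB Require Import structures.
From mathcomp Require Import all_boot all_order all_algebra.
From mathcomp Require Import complex mxtens.
From mathcomp Require Import reals.
Set Implicit Arguments. Unset Strict Implicit. Unset Printing Implicit Defensive.
Import Order.TTheory GRing.Theory Num.Theory.
Local Open Scope ring_scope.

Definition adjmx (C : numClosedFieldType) (p q : nat) (A : 'M[C]_(p, q)) : 'M[C]_(q, p) :=
  (map_mx Num.conj A)^T.

Definition hermitian (C : numClosedFieldType) (p : nat) (A : 'M[C]_p) : Prop :=
  adjmx A = A.

Definition psd (C : numClosedFieldType) (p : nat) (A : 'M[C]_p) : Prop :=
  forall v : 'cV[C]_p, 0 <= (adjmx v *m A *m v) 0 0.

Definition state (C : numClosedFieldType) (p : nat) (A : 'M[C]_p) : Prop :=
  [/\ hermitian A, psd A & \tr A = 1].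

Definition su_generators (C : numClosedFieldType) (p N : nat)
    (l : 'I_N -> 'M[C]_p) : Prop :=
  [/\ forall i, hermitian (l i),
      forall i, \tr (l i) = 0 &
      forall i j, \tr (l i *m l j) = 2 * (i == j)%:R].

Definition orthonormal_basis (C : numClosedFieldType) (p : nat)
    (e : 'I_p -> 'cV[C]_p) : Prop :=
  forall k l, (adjmx (e k) *m e l) 0 0 = (k == l)%:R.

Definition proj (C : numClosedFieldType) (p : nat) (v : 'cV[C]_p) : 'M[C]_p :=
  v *m adjmx v.

Definition zero_discord (C : numClosedFieldType) (m n : nat) (chi : 'M[C]_(m * n)) : Prop :=
  exists (e : 'I_m -> 'cV[C]_m) (pr : 'I_m -> C) (sig : 'I_m -> 'M[C]_n),
    [/\ orthonormal_basis e,
        (forall k, 0 <= pr k), \sum_k pr k = 1,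
        (forall k, state (sig k)) &
        chi = \sum_k pr k *: (proj (e k) *t sig k)].

Definition hs_dist2 (C : numClosedFieldType) (p : nat) (A B : 'M[C]_p) : C :=
  \tr ((A - B) *m (A - B)).

Definition coherence_vector (C : numClosedFieldType) (m N : nat)
    (l : 'I_N -> 'M[C]_m) (P : 'M[C]_m) (alpha : 'cV[C]_N) : Prop :=
  (forall i, alpha i 0 \is Num.real) /\
  P = (m%:R)^-1 *: (1%:M + \sum_i alpha i 0 *: l i).

Definition xvec (C : numClosedFieldType) (m n NA : nat)
    (lA : 'I_NA -> 'M[C]_m) (rho : 'M[C]_(m * n)) : 'cV[C]_NA :=
  \col_i (m%:R / 2 * \tr ((lA i *t (1%:M : 'M[C]_n)) *m rho)).

Definition corrmx (C : numClosedFieldType) (m n NA NB : nat)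
    (lA : 'I_NA -> 'M[C]_m) (lB : 'I_NB -> 'M[C]_n) (rho : 'M[C]_(m * n))
    : 'M[C]_(NA, NB) :=
  \matrix_(i, j) ((m * n)%:R / 4 * \tr ((lA i *t lB j) *m rho)).

Definition Gmx (C : numClosedFieldType) (m n NA NB : nat)
    (lA : 'I_NA -> 'M[C]_m) (lB : 'I_NB -> 'M[C]_n) (rho : 'M[C]_(m * n))
    : 'M[C]_NA :=
  xvec lA rho *m (xvec lA rho)^T
  + (2 / n%:R) *: (corrmx lA lB rho *m (corrmx lA lB rho)^T).

Definition basis_score (C : numClosedFieldType) (m NA : nat)
    (G : 'M[C]_NA) (alpha : 'I_m -> 'cV[C]_NA) : C :=
  \sum_k (let mu := (sqrtC 2 / m%:R) *: alpha k in ((mu^T *m G *m mu) 0 0)).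

(* For a classical-quantum state chi = sum_k p_k |k><k| (x) s_k the Hilbert-Schmidt distance
   splits as Tr rho^2 - sum_k Tr r_k^2 + sum_k Tr (r_k - p_k s_k)^2, where
   r_k = Tr_A ((|k><k| (x) 1) rho) is positive semidefinite.  The last sum vanishes for
   p_k = Tr r_k and s_k = r_k / p_k, so D_G(rho) = Tr rho^2 - max_{|k>} sum_k Tr r_k^2, a maximum
   that is attained because orthonormal bases form a compact set.  Expanding
   |k><k| = (1 + alpha_k . lambda^A) / m and using sum_k alpha_k = 0, both Tr rho^2 and
   sum_k Tr r_k^2 contain the same term Tr (Tr_A rho)^2 / m, which is the only place where y
   enters, and their difference is 2/(m^2 n) [Tr G - sum_k mu_k^t G mu_k]. *)

From Pilot Require Import Defs.
From HB Require Import structures.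
From mathcomp Require Import all_boot all_order all_algebra.
From mathcomp Require Import complex mxtens.
From mathcomp Require Import reals.
From mathcomp Require Import ring lra.
From mathcomp Require all_classical all_analysis.
Set Implicit Arguments. Unset Strict Implicit. Unset Printing Implicit Defensive.
Import Order.TTheory GRing.Theory Num.Theory.
Local Open Scope ring_scope.

Section MatrixFacts.
Variable C : numClosedFieldType.
Implicit Types p q : nat.

Lemma adjmxE p q (A : 'M[C]_(p, q)) i j : adjmx A i j = (A j i)^*.
Proof. by rewrite !mxE. Qed.

Lemma adjmxD p q (A B : 'M[C]_(p, q)) : adjmx (A + B) = adjmx A + adjmx B.
Proof. by apply/matrixP => i j; rewrite !(mxE, adjmxE) rmorphD. Qed.

Lemma adjmxB p q (A B : 'M[C]_(p, q)) : adjmx (A - B) = adjmx A - adjmx B.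
Proof. by apply/matrixP => i j; rewrite !(mxE, adjmxE) rmorphB. Qed.

Lemma adjmxZ p q k (A : 'M[C]_(p, q)) : adjmx (k *: A) = k^* *: adjmx A.
Proof. by apply/matrixP => i j; rewrite !(mxE, adjmxE) rmorphM. Qed.

Lemma hermitianP p (A : 'M[C]_p) : Defs.hermitian A -> forall i j, A i j = (A j i)^*.
Proof. by move=> hA i j; rewrite -[in LHS]hA adjmxE. Qed.

Lemma hermitianBZ p (A B : 'M[C]_p) (k : C) :
  Defs.hermitian A -> Defs.hermitian B -> k \is Num.real -> Defs.hermitian (A - k *: B).
Proof. by move=> hA hB kr; rewrite /Defs.hermitian adjmxB adjmxZ conj_Creal // hA hB. Qed.

Lemma hermitianZ p (A : 'M[C]_p) (k : C) :
  Defs.hermitian A -> k \is Num.real -> Defs.hermitian (k *: A).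
Proof. by move=> hA kr; rewrite /Defs.hermitian adjmxZ conj_Creal // hA. Qed.

Lemma mxtrace_mulE p (A B : 'M[C]_p) : \tr (A *m B) = \sum_i \sum_j A i j * B j i.
Proof. by apply: eq_bigr => i _; rewrite mxE. Qed.

Lemma mxtrace_mul_lincomb p I J (a : I -> C) (b : J -> C) (rI : seq I) (rJ : seq J)
    (A : I -> 'M[C]_p) (B : J -> 'M[C]_p) :
  \tr ((\sum_(i <- rI) a i *: A i) *m (\sum_(j <- rJ) b j *: B j))
    = \sum_(i <- rI) \sum_(j <- rJ) a i * b j * \tr (A i *m B j).
Proof.
rewrite mulmx_suml raddf_sum /=; apply: eq_bigr => i _.
rewrite mulmx_sumr raddf_sum /=; apply: eq_bigr => j _.
by rewrite -scalemxAl -scalemxAr !mxtraceZ mulrA.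
Qed.

Lemma bilinear_formE p (u v : 'cV[C]_p) (M : 'M[C]_p) :
  (u^T *m M *m v) 0 0 = \sum_i \sum_j u i 0 * M i j * v j 0.
Proof.
rewrite mxE exchange_big /=; apply: eq_bigr => i _.
by rewrite mxE big_distrl /=; apply: eq_bigr => j _; rewrite mxE.
Qed.

Lemma mxtrace_mul_herm_real p (A B : 'M[C]_p) :
  Defs.hermitian A -> Defs.hermitian B -> \tr (A *m B) \is Num.real.
Proof.
move=> hA hB; rewrite CrealE mxtrace_mulE rmorph_sum exchange_big /=.
apply/eqP/eq_bigr => i _; rewrite rmorph_sum; apply: eq_bigr => j _ /=.
by rewrite rmorphM /= -(hermitianP hA) -(hermitianP hB) mulrC.
Qed.

Lemma mxtrace_sqr_herm_ge0 p (A : 'M[C]_p) : Defs.hermitian A -> 0 <= \tr (A *m A).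
Proof.
move=> hA; rewrite mxtrace_mulE; apply: sumr_ge0 => i _; apply: sumr_ge0 => j _.
by rewrite [A j i](hermitianP hA) mul_conjC_ge0.
Qed.

Lemma qform_delta p (M : 'M[C]_p) i j :
  (adjmx (delta_mx i 0 : 'cV[C]_p) *m M *m (delta_mx j 0 : 'cV[C]_p)) 0 0 = M i j.
Proof.
have -> : adjmx (delta_mx i 0 : 'cV[C]_p) = delta_mx 0 i.
  by apply/matrixP => a b; rewrite adjmxE !mxE rmorph_nat andbC.
by rewrite -rowE -colE !mxE.
Qed.

Lemma qformE p (v : 'cV[C]_p) (M : 'M[C]_p) :
  (adjmx v *m M *m v) 0 0 = \sum_i \sum_j (v i 0)^* * M i j * v j 0.
Proof.
rewrite mxE exchange_big /=; apply: eq_bigr => i _.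
by rewrite mxE big_distrl /=; apply: eq_bigr => j _; rewrite adjmxE.
Qed.

Lemma state_dim_gt0 p (A : 'M[C]_p) : state A -> (0 < p)%N.
Proof. by case: p A => // A [_ _]; rewrite /mxtrace big_ord0 => /eqP; rewrite eq_sym oner_eq0. Qed.

Lemma psd_diag_ge0 p (M : 'M[C]_p) i : psd M -> 0 <= M i i.
Proof. by move=> pM; have := pM (delta_mx i 0); rewrite qform_delta. Qed.

Lemma psd_diag_eq0 p (M : 'M[C]_p) :
  Defs.hermitian M -> psd M -> (forall i, M i i = 0) -> M = 0.
Proof.
move=> hM pM d0; apply/matrixP => i j; rewrite mxE.
have [->|_] := eqVneq i j; first exact: d0.
have addE (A B : 'M[C]_1) : (A + B) 0 0 = A 0 0 + B 0 0 by rewrite mxE.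
have scaleE k (A : 'M[C]_1) : (k *: A) 0 0 = k * A 0 0 by rewrite mxE.
have := pM (- M i j *: delta_mx i 0 + delta_mx j 0).
rewrite adjmxD adjmxZ !(mulmxDl, mulmxDr) -!scalemxAl -!scalemxAr !addE !scaleE.
(* with the coefficient [- M i j], the quadratic form is [- 2 |M i j|^2] *)
rewrite !qform_delta !d0 (hermitianP hM j i) !mulr0 !add0r addr0 rmorphN /=.
rewrite !mulNr [_^* * _]mulrC -opprD oppr_ge0 -mulr2n pmulrn_lle0 // => h.
by apply/eqP; rewrite -mul_conjC_eq0 eq_le mul_conjC_ge0 andbT.
Qed.

Lemma psd_trace_eq0 p (M : 'M[C]_p) : Defs.hermitian M -> psd M -> \tr M = 0 -> M = 0.
Proof.
move=> hM pM tr0; apply: psd_diag_eq0 => // i.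
by apply: (psumr_eq0P _ tr0) => // j _; apply: psd_diag_ge0.
Qed.

Lemma psdZ p (M : 'M[C]_p) k : 0 <= k -> psd M -> psd (k *: M).
Proof. by move=> k0 pM v; rewrite -scalemxAr -scalemxAl mxE mulr_ge0. Qed.

Lemma hermitian_proj p (v : 'cV[C]_p) : Defs.hermitian (proj v).
Proof.
apply/matrixP => i j; rewrite adjmxE !mxE rmorph_sum; apply: eq_bigr => k _.
by rewrite !adjmxE rmorphM /= conjCK mulrC.
Qed.

Lemma psd_proj p (u : 'cV[C]_p) : psd (proj u).
Proof.
move=> v; rewrite /proj mulmxA -mulmxA [in X in 0 <= X]mxE big_ord1.
have -> : (adjmx u *m v) 0 0 = ((adjmx v *m u) 0 0)^*.
  rewrite !mxE rmorph_sum; apply: eq_bigr => i _.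
  by rewrite rmorphM !adjmxE /= conjCK mulrC.
exact: mul_conjC_ge0.
Qed.

Lemma onb_adj_mul p (e : 'I_p -> 'cV[C]_p) k l :
  orthonormal_basis e -> adjmx (e k) *m e l = (k == l)%:R%:M.
Proof. by move=> oe; apply/matrixP => i j; rewrite !ord1 oe mxE /= mulr1n. Qed.

Lemma onb_delta p : orthonormal_basis (fun k : 'I_p => delta_mx k 0 : 'cV[C]_p).
Proof. by move=> k l; rewrite -(mulmx1 (adjmx _)) qform_delta mxE. Qed.

Lemma sum_proj_onb p (e : 'I_p -> 'cV[C]_p) :
  orthonormal_basis e -> \sum_k proj (e k) = 1%:M.
Proof.
move=> oe; pose U : 'M[C]_p := \matrix_(a, k) e k a 0.
have UU : adjmx U *m U = 1%:M.
  apply/matrixP => k l; rewrite [RHS]mxE -(oe k l) !mxE.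
  by apply: eq_bigr => a _; rewrite !adjmxE !mxE.
rewrite -(mulmx1C UU); apply/matrixP => a c; rewrite summxE !mxE.
by apply: eq_bigr => k _; rewrite mxE big_ord1 !adjmxE !mxE.
Qed.

Lemma proj_onb_mul p (e : 'I_p -> 'cV[C]_p) k l :
  orthonormal_basis e -> proj (e k) *m proj (e l) = (k == l)%:R *: proj (e k).
Proof.
move=> oe; rewrite /proj mulmxA -(mulmxA (e k)) onb_adj_mul // mul_mx_scalar.
by rewrite -scalemxAl; case: eqVneq => [->|_]; rewrite ?scale0r.
Qed.

Lemma mxtrace_proj_onb p (e : 'I_p -> 'cV[C]_p) k :
  orthonormal_basis e -> \tr (proj (e k)) = 1.
Proof. by move=> oe; rewrite mxtrace_mulC onb_adj_mul // eqxx mxtrace_scalar. Qed.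

End MatrixFacts.

Section PartialTrace.
Variable C : numClosedFieldType.
Variables m n : nat.
Implicit Types (X : 'M[C]_m) (Y : 'M[C]_n) (rho sig : 'M[C]_(m * n)).

Lemma sum_mxtens_index (F : 'I_(m * n) -> C) :
  \sum_r F r = \sum_a \sum_b F (mxtens_index (a, b)).
Proof.
rewrite pair_big /= (reindex (@mxtens_index m n)) /=; first by apply: eq_bigr => -[].
by exists (@mxtens_unindex m n) => x _; [apply: mxtens_indexK | apply: mxtens_unindexK].
Qed.

Lemma mxtrace_tensmx X Y : \tr (X *t Y) = \tr X * \tr Y.
Proof.
rewrite /mxtrace sum_mxtens_index mulr_suml; apply: eq_bigr => a _.
by rewrite mulr_sumr; apply: eq_bigr => b _; rewrite tensmxE.
Qed.

Lemma tensmx11 : (1%:M : 'M[C]_m) *t (1%:M : 'M[C]_n) = 1%:M.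
Proof.
apply/matrixP => i j; case: (mxtens_indexP i) => a b; case: (mxtens_indexP j) => c d.
rewrite tensmxE !mxE (inj_eq (can_inj (@mxtens_indexK m n))) xpair_eqE.
by rewrite -natrM mulnb.
Qed.

(* [ptrace rho X] is Tr_A ((X (x) 1) rho); the partial trace over A is [ptrace rho 1%:M]. *)
Definition ptrace rho X : 'M[C]_n :=
  \matrix_(b, d) \sum_a \sum_c X c a * rho (mxtens_index (a, b)) (mxtens_index (c, d)).

Fact ptrace_is_semilinear rho : semilinear (ptrace rho).
Proof.
split=> [k X | X X']; apply/matrixP => b d; rewrite !mxE.
  rewrite mulr_sumr; apply: eq_bigr => a _; rewrite mulr_sumr.
  by apply: eq_bigr => c _; rewrite mxE mulrA.
rewrite -big_split; apply: eq_bigr => a _; rewrite -big_split.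
by apply: eq_bigr => c _; rewrite mxE mulrDl.
Qed.

HB.instance Definition _ rho :=
  GRing.isSemilinear.Build C 'M[C]_m 'M[C]_n _ (ptrace rho) (ptrace_is_semilinear rho).

Lemma mxtrace_tensmx_ptrace X Y rho : \tr ((X *t Y) *m rho) = \tr (Y *m ptrace rho X).
Proof.
rewrite /mxtrace sum_mxtens_index.
transitivity (\sum_c \sum_d \sum_a \sum_b
    X c a * Y d b * rho (mxtens_index (a, b)) (mxtens_index (c, d))).
  apply: eq_bigr => c _; apply: eq_bigr => d _; rewrite mxE sum_mxtens_index.
  by apply: eq_bigr => a _; apply: eq_bigr => b _; rewrite tensmxE.
rewrite exchange_big; apply: eq_bigr => d _ /=; rewrite mxE exchange_big /=.
rewrite (eq_bigr _ (fun a _ => exchange_big _ _ _ _ _ _)) exchange_big /=.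
apply: eq_bigr => b _; rewrite mxE big_distrr; apply: eq_bigr => a _ /=.
by rewrite big_distrr; apply: eq_bigr => c _ /=; rewrite mulrA [Y d b * _]mulrC.
Qed.

Lemma mxtrace_ptrace1 rho : \tr (ptrace rho 1%:M) = \tr rho.
Proof. by have := mxtrace_tensmx_ptrace 1%:M 1%:M rho; rewrite tensmx11 !mul1mx. Qed.

Lemma hermitian_ptrace rho X :
  Defs.hermitian X -> Defs.hermitian rho -> Defs.hermitian (ptrace rho X).
Proof.
move=> hX hrho; apply/matrixP => b d; rewrite adjmxE !mxE rmorph_sum exchange_big /=.
apply: eq_bigr => a _; rewrite rmorph_sum; apply: eq_bigr => c _ /=.
by rewrite rmorphM /= -(hermitianP hX) -(hermitianP hrho).
Qed.

Definition tensvec (v : 'cV[C]_m) (w : 'cV[C]_n) : 'cV[C]_(m * n) :=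
  \col_r (v (mxtens_unindex r).1 0 * w (mxtens_unindex r).2 0).

Lemma qform_ptrace_proj rho (v : 'cV[C]_m) (w : 'cV[C]_n) :
  (adjmx w *m ptrace rho (proj v) *m w) 0 0 = (adjmx (tensvec v w) *m rho *m tensvec v w) 0 0.
Proof.
rewrite !qformE sum_mxtens_index.
transitivity (\sum_a \sum_b \sum_c \sum_d (v a 0 * w b 0)^*
   * rho (mxtens_index (a, b)) (mxtens_index (c, d)) * (v c 0 * w d 0)); last first.
  apply: eq_bigr => a _; apply: eq_bigr => b _; rewrite sum_mxtens_index.
  by apply: eq_bigr => c _; apply: eq_bigr => d _; rewrite !mxE !mxtens_indexK.
under [RHS]eq_bigr do under eq_bigr do rewrite exchange_big.
rewrite [RHS]exchange_big; under [RHS]eq_bigr do rewrite exchange_big.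
apply: eq_bigr => b _; apply: eq_bigr => d _.
rewrite mxE big_distrr big_distrl /=; apply: eq_bigr => a _.
rewrite big_distrr big_distrl /=; apply: eq_bigr => c _.
by rewrite /proj mxE big_ord1 adjmxE rmorphM /=; ring.
Qed.

Lemma psd_ptrace_proj rho (v : 'cV[C]_m) : psd rho -> psd (ptrace rho (proj v)).
Proof. by move=> prho w; rewrite qform_ptrace_proj. Qed.

Definition tens_block rho b d : 'M[C]_m :=
  \matrix_(a, c) rho (mxtens_index (a, b)) (mxtens_index (c, d)).

Lemma ptrace_block rho X b d : ptrace rho X b d = \tr (X *m tens_block rho b d).
Proof.
rewrite mxE mxtrace_mulE exchange_big; apply: eq_bigr => a _.
by apply: eq_bigr => c _; rewrite mxE.
Qed.

Lemma mxtrace_mul_tens_block rho sig :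
  \tr (rho *m sig) = \sum_b \sum_d \tr (tens_block rho b d *m tens_block sig d b).
Proof.
rewrite mxtrace_mulE sum_mxtens_index.
transitivity (\sum_a \sum_b \sum_c \sum_d rho (mxtens_index (a, b)) (mxtens_index (c, d))
                 * sig (mxtens_index (c, d)) (mxtens_index (a, b))).
  by apply: eq_bigr => a _; apply: eq_bigr => b _; rewrite sum_mxtens_index.
rewrite exchange_big; apply: eq_bigr => b _ /=.
rewrite (eq_bigr _ (fun a _ => exchange_big _ _ _ _ _ _)) exchange_big.
apply: eq_bigr => d _ /=; rewrite mxtrace_mulE.
by apply: eq_bigr => a _; apply: eq_bigr => c _; rewrite !mxE.
Qed.

End PartialTrace.

Section SuGenerators.
Variable C : numClosedFieldType.
Variables (p : nat) (l : 'I_(p ^ 2 - 1) -> 'M[C]_p).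
Hypotheses (p_gt0 : (0 < p)%N) (sl : su_generators l).

Let p_neq0 : (p%:R : C) != 0. Proof. by rewrite pnatr_eq0 -lt0n. Qed.

(* The identity followed by the generators; [su_frame_norm j] is [Tr (su_frame j)^2]. *)
Definition su_frame (j : 'I_(p ^ 2 - 1).+1) : 'M[C]_p :=
  if unlift ord0 j is Some i then l i else 1%:M.

Definition su_frame_norm (j : 'I_(p ^ 2 - 1).+1) : C :=
  if unlift ord0 j is Some i then 2 else p%:R.

Lemma su_frame_norm_neq0 j : su_frame_norm j != 0.
Proof. by rewrite /su_frame_norm; case: unliftP => [i _|_]; rewrite ?pnatr_eq0 // -lt0n. Qed.

Lemma mxtrace_su_frame_mul j k :
  \tr (su_frame j *m su_frame k) = (j == k)%:R * su_frame_norm j.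
Proof.
have [_ l_tr0 l_orth] := sl.
rewrite /su_frame /su_frame_norm.
case: (unliftP ord0 j) => [i ->|->]; case: (unliftP ord0 k) => [i' ->|->].
- by rewrite l_orth (inj_eq lift_inj) mulrC.
- by rewrite mulmx1 l_tr0 eq_sym (negbTE (neq_lift _ _)) mul0r.
- by rewrite mul1mx l_tr0 (negbTE (neq_lift _ _)) mul0r.
- by rewrite mulmx1 mxtrace1 eqxx mul1r.
Qed.

Lemma mxtrace_su_frame_coord (c : 'I_(p ^ 2 - 1).+1 -> C) j :
  \tr (su_frame j *m \sum_k c k *: su_frame k) = c j * su_frame_norm j.
Proof.
rewrite mulmx_sumr raddf_sum (bigD1 j) //= big1 => [|k kj].
  by rewrite -scalemxAr mxtraceZ mxtrace_su_frame_mul eqxx mul1r addr0.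
by rewrite -scalemxAr mxtraceZ mxtrace_su_frame_mul eq_sym (negbTE kj) mul0r mulr0.
Qed.

Lemma su_frame_basis : basis_of fullv (mktuple su_frame).
Proof.
rewrite basisEfree subvf dimvf size_tuple dim_matrix andbC; apply/andP; split.
  by rewrite /= -mulnn subn1 prednK //; exact: ltn_mul p_gt0 p_gt0.
apply/freeP => c c0 j.
have := mxtrace_su_frame_coord c j.
rewrite (eq_bigr (fun k => c k *: (mktuple su_frame)`_k)) => [|k _]; last first.
  by rewrite nth_mktuple.
rewrite c0 mulmx0 linear0 => /esym/eqP.
by rewrite mulf_eq0 (negbTE (su_frame_norm_neq0 j)) orbF => /eqP.
Qed.

Lemma su_decomp (Z : 'M[C]_p) :
  Z = (\tr Z / p%:R) *: 1%:M + \sum_i (\tr (l i *m Z) / 2) *: l i.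
Proof.
have [c eZ] : exists c, Z = \sum_k c k *: su_frame k.
  exists (coord (mktuple su_frame) ^~ Z).
  rewrite {1}(coord_basis su_frame_basis (memvf Z)).
  by apply: eq_bigr => k _; rewrite nth_mktuple.
have cE j : c j = \tr (su_frame j *m Z) / su_frame_norm j.
  by rewrite eZ mxtrace_su_frame_coord mulfK ?su_frame_norm_neq0.
rewrite {1}eZ big_ord_recl cE /su_frame /su_frame_norm unlift_none mul1mx.
by congr (_ + _); apply: eq_bigr => i _; rewrite cE /su_frame /su_frame_norm liftK.
Qed.

Lemma mxtrace_mul_su (Y Z : 'M[C]_p) :
  \tr (Y *m Z) = \tr Y * \tr Z / p%:R + \sum_i \tr (l i *m Y) * \tr (l i *m Z) / 2.
Proof.
rewrite {1}(su_decomp Z) mulmxDr mulmx_sumr mxtraceD raddf_sum /=.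
rewrite -scalemxAr mulmx1 mxtraceZ mulrC mulrA; congr (_ + _).
by apply: eq_bigr => i _; rewrite -scalemxAr mxtraceZ [\tr (Y *m _)]mxtrace_mulC; ring.
Qed.

Lemma mxtrace_mul_ptrace_su n (rho sig : 'M[C]_(p * n)) :
  \tr (rho *m sig) = \tr (ptrace rho 1%:M *m ptrace sig 1%:M) / p%:R
     + \sum_i \tr (ptrace rho (l i) *m ptrace sig (l i)) / 2.
Proof.
rewrite mxtrace_mul_tens_block.
under eq_bigr do under eq_bigr do rewrite mxtrace_mul_su.
rewrite !mxtrace_mulE; under eq_bigr do rewrite big_split /=.
rewrite big_split /= mulr_suml; congr (_ + _).
  by apply: eq_bigr => b _; rewrite mulr_suml; apply: eq_bigr => d _;
    rewrite !ptrace_block !mul1mx.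
under eq_bigr do rewrite exchange_big; rewrite exchange_big /=.
apply: eq_bigr => i _; rewrite mxtrace_mulE mulr_suml.
apply: eq_bigr => b _; rewrite mulr_suml; apply: eq_bigr => d _.
by rewrite !ptrace_block.
Qed.

Lemma coherence_vectorE P alpha :
  coherence_vector l P alpha -> forall i, alpha i 0 = p%:R / 2 * \tr (l i *m P).
Proof.
have [_ l_tr0 l_orth] := sl.
move=> [_ ->] i; rewrite -scalemxAr mxtraceZ mulmxDr mulmx1 mxtraceD l_tr0 add0r.
rewrite mulmx_sumr raddf_sum (bigD1 i) //= big1 => [|j ji]; last first.
  by rewrite -scalemxAr mxtraceZ l_orth eq_sym (negbTE ji) !mulr0.
rewrite -scalemxAr mxtraceZ l_orth eqxx mulr1 addr0.
by field; rewrite p_neq0.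
Qed.

Lemma coherence_vector_herm P : Defs.hermitian P -> \tr P = 1 ->
  coherence_vector l P (\col_i (p%:R / 2 * \tr (l i *m P))).
Proof.
have [l_herm _ _] := sl.
move=> hP trP; split=> [i|].
  rewrite mxE rpredM ?mxtrace_mul_herm_real //.
  by rewrite rpred_div ?rpred_nat.
rewrite {1}(su_decomp P) trP scalerDr scaler_sumr mul1r; congr (_ + _).
by apply: eq_bigr => i _; rewrite scalerA mxE; congr (_ *: _); field.
Qed.

End SuGenerators.

Section ClassicalQuantumStates.
Variable C : numClosedFieldType.
Variables m n : nat.
Implicit Types (rho : 'M[C]_(m * n)) (e : 'I_m -> 'cV[C]_m).

Definition measured_purity rho e :=
  \sum_k \tr (ptrace rho (proj (e k)) *m ptrace rho (proj (e k))).

Lemma hs_dist2_cq rho e (w : 'I_m -> C) (s : 'I_m -> 'M[C]_n) :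
  orthonormal_basis e ->
  let r k := ptrace rho (proj (e k)) in
  hs_dist2 rho (\sum_k w k *: (proj (e k) *t s k)) =
    \tr (rho *m rho) - measured_purity rho e
    + \sum_k \tr ((r k - w k *: s k) *m (r k - w k *: s k)).
Proof.
move=> oe r; set chi := \sum_k w k *: _.
have tr_chi_rho : \tr (chi *m rho) = \sum_k w k * \tr (s k *m r k).
  rewrite mulmx_suml raddf_sum /=; apply: eq_bigr => k _.
  by rewrite -scalemxAl mxtraceZ mxtrace_tensmx_ptrace.
have tr_chi2 : \tr (chi *m chi) = \sum_k w k ^+ 2 * \tr (s k *m s k).
  rewrite mxtrace_mul_lincomb; apply: eq_bigr => k _.
  rewrite (bigD1 k) //= big1 => [|l lk]; last first.
    by rewrite tensmx_mul proj_onb_mul // eq_sym (negbTE lk) scale0r tens0mx mxtrace0 mulr0.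
  by rewrite tensmx_mul proj_onb_mul // eqxx scale1r mxtrace_tensmx mxtrace_proj_onb // mul1r addr0.
have tr_diff2 k : \tr ((r k - w k *: s k) *m (r k - w k *: s k)) =
    \tr (r k *m r k) - 2 * (w k * \tr (s k *m r k)) + w k ^+ 2 * \tr (s k *m s k).
  rewrite mulmxBl !mulmxBr -!scalemxAl -!scalemxAr !raddfB /= !mxtraceZ.
  by rewrite [\tr (r k *m s k)]mxtrace_mulC; ring.
rewrite /hs_dist2 mulmxBl !mulmxBr !raddfB /= [\tr (rho *m chi)]mxtrace_mulC.
rewrite tr_chi_rho tr_chi2 (eq_bigr _ (fun k _ => tr_diff2 k)).
by rewrite /measured_purity big_split /= sumrB -mulr_sumr; ring.
Qed.

Lemma hs_dist2_zero_discord_ge rho chi : Defs.hermitian rho -> zero_discord chi ->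
  exists2 e, orthonormal_basis e & \tr (rho *m rho) - measured_purity rho e <= hs_dist2 rho chi.
Proof.
move=> hrho [e [w [s [oe w_ge0 _ s_state ->]]]]; exists e => //.
rewrite hs_dist2_cq // lerDl; apply: sumr_ge0 => k _; apply: mxtrace_sqr_herm_ge0.
have [hs _ _] := s_state k.
apply: hermitianBZ => //; last exact: ger0_real.
by apply: hermitian_ptrace => //; apply: hermitian_proj.
Qed.

(* The conditional states [r k / Tr (r k)] are optimal; where [Tr (r k) = 0] any state will do. *)
Lemma zero_discord_attains rho e : (0 < n)%N -> state rho -> orthonormal_basis e ->
  exists2 chi, zero_discord chi & hs_dist2 rho chi = \tr (rho *m rho) - measured_purity rho e.
Proof.
move=> n_gt0 [hrho prho tr_rho] oe.
pose r k := ptrace rho (proj (e k)).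
have hr k : Defs.hermitian (r k) by apply: hermitian_ptrace => //; apply: hermitian_proj.
have pr k : psd (r k) by apply: psd_ptrace_proj.
pose w k := \tr (r k).
have w_ge0 k : 0 <= w k by apply: sumr_ge0 => a _; apply: psd_diag_ge0.
have w_sum : \sum_k w k = 1.
  by rewrite -raddf_sum -linear_sum /= sum_proj_onb // mxtrace_ptrace1.
pose s0 : 'M[C]_n := proj (delta_mx (Ordinal n_gt0) 0).
have s0_state : state s0.
  split; [exact: hermitian_proj | exact: psd_proj | exact: (mxtrace_proj_onb _ (@onb_delta C n))].
pose s k := if w k == 0 then s0 else (w k)^-1 *: r k.
have ws k : w k *: s k = r k.
  rewrite /s; case: eqP => [w0|/eqP w_neq0]; last by rewrite scalerA divff ?scale1r.
  by rewrite w0 scale0r; symmetry; apply: psd_trace_eq0.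
have s_state k : state (s k).
  rewrite /s; case: eqP => [//|/eqP w_neq0].
  split; first by apply: hermitianZ; rewrite ?rpredV ?ger0_real.
    by apply: psdZ; rewrite ?invr_ge0.
  by rewrite mxtraceZ mulVf.
exists (\sum_k w k *: (proj (e k) *t s k)); first by exists e, w, s.
rewrite hs_dist2_cq // big1 ?addr0 // => k _.
by rewrite ws subrr mul0mx mxtrace0.
Qed.

End ClassicalQuantumStates.

Section CoherenceVectorForm.
Variable C : numClosedFieldType.
Variables (m n : nat) (lA : 'I_(m ^ 2 - 1) -> 'M[C]_m) (lB : 'I_(n ^ 2 - 1) -> 'M[C]_n).
Variable rho : 'M[C]_(m * n).
Hypotheses (m_gt0 : (0 < m)%N) (n_gt0 : (0 < n)%N).
Hypotheses (sA : su_generators lA) (sB : su_generators lB).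

Local Notation G := (Gmx lA lB rho).
Local Notation rA i := (ptrace rho (lA i)).
Local Notation r0 := (ptrace rho 1%:M).

Let m_neq0 : (m%:R : C) != 0. Proof. by rewrite pnatr_eq0 -lt0n. Qed.
Let n_neq0 : (n%:R : C) != 0. Proof. by rewrite pnatr_eq0 -lt0n. Qed.

Lemma xvecE i : xvec lA rho i 0 = m%:R / 2 * \tr (rA i).
Proof. by rewrite mxE mxtrace_tensmx_ptrace mul1mx. Qed.

Lemma corrmxE i j : corrmx lA lB rho i j = (m * n)%:R / 4 * \tr (lB j *m rA i).
Proof. by rewrite mxE mxtrace_tensmx_ptrace. Qed.

Lemma GmxE i l : G i l = xvec lA rho i 0 * xvec lA rho l 0
  + 2 / n%:R * \sum_j corrmx lA lB rho i j * corrmx lA lB rho l j.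
Proof.
rewrite !mxE big_ord1 !mxE; congr (_ + _ * _).
by apply: eq_bigr => j _; rewrite [_^T _ _]mxE.
Qed.

Lemma mxtrace_mul_ptrace_gen i l : \tr (rA i *m rA l) = 4 / (m ^ 2 * n)%:R * G i l.
Proof.
rewrite GmxE (mxtrace_mul_su n_gt0 sB) !xvecE mulrDr natrM natrX; congr (_ + _).
  by field; rewrite n_neq0 m_neq0.
rewrite mulrA mulr_sumr; apply: eq_bigr => j _; rewrite !corrmxE natrM.
by field; rewrite n_neq0 m_neq0.
Qed.

Lemma mxtrace_sqr_rho :
  \tr (rho *m rho) = \tr (r0 *m r0) / m%:R + 2 / (m ^ 2 * n)%:R * \tr G.
Proof.
rewrite (mxtrace_mul_ptrace_su m_gt0 sA); congr (_ + _).
rewrite [in RHS]/mxtrace mulr_sumr; apply: eq_bigr => i _.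
rewrite mxtrace_mul_ptrace_gen natrM natrX.
by field; rewrite n_neq0 m_neq0.
Qed.

Lemma basis_scoreE (alpha : 'I_m -> 'cV[C]_(m ^ 2 - 1)) :
  basis_score G alpha =
    2 / m%:R ^+ 2 * \sum_k \sum_i \sum_l alpha k i 0 * G i l * alpha k l 0.
Proof.
have sqrt2E : (sqrtC 2 / m%:R) ^+ 2 = 2 / m%:R ^+ 2 :> C by rewrite expr_div_n sqrtCK.
rewrite /basis_score mulr_sumr; apply: eq_bigr => k _ /=.
rewrite bilinear_formE mulr_sumr; apply: eq_bigr => i _.
rewrite mulr_sumr; apply: eq_bigr => l _.
by rewrite ![((_ *: _ : 'cV_(m ^ 2 - 1)) _ _)]mxE -sqrt2E; ring.
Qed.

Lemma ptrace_coherence P (alpha : 'cV[C]_(m ^ 2 - 1)) : coherence_vector lA P alpha ->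
  ptrace rho P = m%:R^-1 *: (r0 + \sum_i alpha i 0 *: rA i).
Proof.
by move=> [_ ->]; rewrite linearZ linearD linear_sum /=; under eq_bigr do rewrite linearZ.
Qed.

Lemma measured_purityE (e : 'I_m -> 'cV[C]_m) (alpha : 'I_m -> 'cV[C]_(m ^ 2 - 1)) :
  orthonormal_basis e -> (forall k, coherence_vector lA (proj (e k)) (alpha k)) ->
  measured_purity rho e = \tr (r0 *m r0) / m%:R + 2 / (m ^ 2 * n)%:R * basis_score G alpha.
Proof.
move=> oe coh; pose Y k := \sum_i alpha k i 0 *: rA i.
have alpha_sum i : \sum_k alpha k i 0 = 0.
  rewrite (eq_bigr _ (fun k _ => coherence_vectorE m_gt0 sA (coh k) i)) -mulr_sumr.
  by rewrite -raddf_sum /= -mulmx_sumr sum_proj_onb // mulmx1; case: sA => _ -> _; rewrite mulr0.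
have cross : \sum_k \tr (r0 *m Y k) = 0.
  under eq_bigr do rewrite mulmx_sumr raddf_sum /=.
  under eq_bigr do under eq_bigr do rewrite -scalemxAr mxtraceZ.
  rewrite exchange_big big1 // => i _ /=.
  by rewrite -mulr_suml alpha_sum mul0r.
have YY k : \tr (Y k *m Y k) = 4 / (m ^ 2 * n)%:R *
    \sum_i \sum_l alpha k i 0 * G i l * alpha k l 0.
  rewrite mxtrace_mul_lincomb mulr_sumr; apply: eq_bigr => i _.
  by rewrite mulr_sumr; apply: eq_bigr => l _; rewrite mxtrace_mul_ptrace_gen; ring.
have purity_k k : \tr (ptrace rho (proj (e k)) *m ptrace rho (proj (e k))) =
    m%:R^-2 * (\tr (r0 *m r0) + 2 * \tr (r0 *m Y k)
       + 4 / (m ^ 2 * n)%:R * \sum_i \sum_l alpha k i 0 * G i l * alpha k l 0).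
  rewrite (ptrace_coherence (coh k)) -/(Y k) -scalemxAl -scalemxAr !mxtraceZ.
  rewrite mulmxDl !mulmxDr !mxtraceD [\tr (Y k *m r0)]mxtrace_mulC YY -exprVn expr2; ring.
rewrite /measured_purity (eq_bigr _ (fun k _ => purity_k k)) -mulr_sumr !big_split /=.
rewrite -mulr_sumr cross sumr_const card_ord -mulr_sumr basis_scoreE natrM natrX.
by field; rewrite n_neq0 m_neq0.
Qed.

Lemma measured_purity_score (e : 'I_m -> 'cV[C]_m) (alpha : 'I_m -> 'cV[C]_(m ^ 2 - 1)) :
  orthonormal_basis e -> (forall k, coherence_vector lA (proj (e k)) (alpha k)) ->
  \tr (rho *m rho) - measured_purity rho e = 2 / (m ^ 2 * n)%:R * (\tr G - basis_score G alpha).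
Proof. by move=> oe coh; rewrite mxtrace_sqr_rho (measured_purityE oe coh); ring. Qed.

Lemma ler_basis_score e e' alpha alpha' :
  orthonormal_basis e -> (forall k, coherence_vector lA (proj (e k)) (alpha k)) ->
  orthonormal_basis e' -> (forall k, coherence_vector lA (proj (e' k)) (alpha' k)) ->
  (basis_score G alpha <= basis_score G alpha') =
  (measured_purity rho e <= measured_purity rho e').
Proof.
move=> oe coh oe' coh'.
have c_gt0 : (0 : C) < 2 / (m ^ 2 * n)%:R.
  by rewrite divr_gt0 // ltr0n muln_gt0 expn_gt0 m_gt0.
by rewrite (measured_purityE oe coh) (measured_purityE oe' coh') lerD2l ler_pM2l.
Qed.

End CoherenceVectorForm.

Module CompactOrthonormalBases.
Import boolp classical_sets all_analysis.
Import numFieldNormedType.Exports.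
Import complex. (* [Num.Theory.Re] would otherwise shadow [complex.Re] *)
Local Open Scope classical_set_scope.
Local Open Scope ring_scope.

Section ComplexContinuity.
Variables (R : realType) (K : nat).
Local Notation V := 'rV[R]_K.

Lemma ReD (x y : R[i]) : Re (x + y) = Re x + Re y. Proof. by case: x; case: y. Qed.
Lemma ImD (x y : R[i]) : Im (x + y) = Im x + Im y. Proof. by case: x; case: y. Qed.
Lemma ReM (x y : R[i]) : Re (x * y) = Re x * Re y - Im x * Im y.
Proof. by case: x; case: y. Qed.
Lemma ImM (x y : R[i]) : Im (x * y) = Re x * Im y + Im x * Re y.
Proof. by case: x => a b; case: y. Qed.
Lemma ReJ (x : R[i]) : Re x^* = Re x. Proof. by case: x. Qed.
Lemma ImJ (x : R[i]) : Im x^* = - Im x. Proof. by case: x. Qed.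

Lemma Re_natr k : Re (k%:R : R[i]) = k%:R.
Proof. by elim: k => // k IH; rewrite -addn1 !natrD ReD IH. Qed.

Lemma Im_natr k : Im (k%:R : R[i]) = 0.
Proof. by elim: k => // k IH; rewrite -addn1 !natrD ImD IH add0r. Qed.

Definition ccontinuous (f : V -> R[i]) :=
  continuous (fun v => Re (f v)) /\ continuous (fun v => Im (f v)).

Lemma ccontinuous_ext f g : (forall v, f v = g v) -> ccontinuous f -> ccontinuous g.
Proof. by move=> fg; rewrite (_ : g = f) //; apply: funext => v; rewrite fg. Qed.

Lemma ccontinuous_cst c : ccontinuous (fun=> c).
Proof. by split; apply: cst_continuous. Qed.

Lemma ccontinuousD f g : ccontinuous f -> ccontinuous g -> ccontinuous (fun v => f v + g v).
Proof.
move=> [f1 f2] [g1 g2]; split.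
  by under eq_fun do rewrite ReD; move=> x; exact: cvgD (f1 x) (g1 x).
by under eq_fun do rewrite ImD; move=> x; exact: cvgD (f2 x) (g2 x).
Qed.

Lemma ccontinuousM f g : ccontinuous f -> ccontinuous g -> ccontinuous (fun v => f v * g v).
Proof.
move=> [f1 f2] [g1 g2]; split.
  under eq_fun do rewrite ReM.
  by move=> x; exact: cvgB (cvgM (f1 x) (g1 x)) (cvgM (f2 x) (g2 x)).
under eq_fun do rewrite ImM.
by move=> x; exact: cvgD (cvgM (f1 x) (g2 x)) (cvgM (f2 x) (g1 x)).
Qed.

Lemma ccontinuousJ f : ccontinuous f -> ccontinuous (fun v => (f v)^*).
Proof.
move=> [f1 f2]; split; first by under eq_fun do rewrite ReJ.
by under eq_fun do rewrite ImJ; move=> x; exact: cvgN (f2 x).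
Qed.

Lemma ccontinuous_sum I (r : seq I) (P : pred I) (F : I -> V -> R[i]) :
  (forall i, ccontinuous (F i)) -> ccontinuous (fun v => \sum_(i <- r | P i) F i v).
Proof.
move=> cF; elim: r => [|x r IH].
  by apply: ccontinuous_ext (ccontinuous_cst 0) => v; rewrite big_nil.
case: (boolP (P x)) => Px.
  by apply: ccontinuous_ext (ccontinuousD (cF x) IH) => v; rewrite big_cons Px.
by apply: ccontinuous_ext IH => v; rewrite big_cons (negbTE Px).
Qed.

Definition ccontinuous_mx p q (M : V -> 'M[R[i]]_(p, q)) :=
  forall i j, ccontinuous (fun v => M v i j).

Lemma ccontinuous_mxM p q s (A : V -> 'M[R[i]]_(p, q)) (B : V -> 'M[R[i]]_(q, s)) :
  ccontinuous_mx A -> ccontinuous_mx B -> ccontinuous_mx (fun v => A v *m B v).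
Proof.
move=> cA cB i j; apply: (ccontinuous_ext (f := fun v => \sum_k A v i k * B v k j)).
  by move=> v; rewrite mxE.
by apply: ccontinuous_sum => k; apply: ccontinuousM.
Qed.

Lemma ccontinuous_adjmx p q (A : V -> 'M[R[i]]_(p, q)) :
  ccontinuous_mx A -> ccontinuous_mx (fun v => adjmx (A v)).
Proof.
by move=> cA i j; apply: ccontinuous_ext (ccontinuousJ (cA j i)) => v; rewrite adjmxE.
Qed.

Lemma ccontinuous_ptrace m n (rho : 'M[R[i]]_(m * n)) (X : V -> 'M[R[i]]_m) :
  ccontinuous_mx X -> ccontinuous_mx (fun v => ptrace rho (X v)).
Proof.
move=> cX b d; apply: (ccontinuous_ext (f := fun v => \sum_a \sum_c
  X v c a * rho (mxtens_index (a, b)) (mxtens_index (c, d)))) => [v|].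
  by rewrite mxE.
by do 2![apply: ccontinuous_sum => ?]; apply: ccontinuousM (ccontinuous_cst _).
Qed.

Lemma ccontinuous_mxtrace p (A : V -> 'M[R[i]]_p) :
  ccontinuous_mx A -> ccontinuous (fun v => \tr (A v)).
Proof. by move=> cA; apply: ccontinuous_sum => i; apply: cA. Qed.

End ComplexContinuity.

Section MaximalPurity.
Variables (R : realType) (m n : nat) (rho : 'M[R[i]]_(m * n)).
Local Notation K := (m * m + m * m)%N.
Local Notation V := 'rV[R]_K.

(* A family of [m] vectors of [C^m], as its real and imaginary coordinates in [R^(2 m^2)]. *)
Definition family_of_coords (v : V) (k : 'I_m) : 'cV[R[i]]_m :=
  \col_a Complex (v 0 (lshift (m * m) (mxtens_index (a, k))))
                 (v 0 (rshift (m * m) (mxtens_index (a, k)))).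

Definition coords_of_family (e : 'I_m -> 'cV[R[i]]_m) : V :=
  row_mx (\row_r Re (e (mxtens_unindex r).2 (mxtens_unindex r).1 0))
         (\row_r Im (e (mxtens_unindex r).2 (mxtens_unindex r).1 0)).

Lemma coords_of_familyK e k : family_of_coords (coords_of_family e) k = e k.
Proof.
apply/matrixP => a j; rewrite !ord1 mxE row_mxEl row_mxEr !mxE mxtens_indexK /=.
by case: (e k a 0).
Qed.

Lemma ccontinuous_family_of_coords k : ccontinuous_mx (fun v : V => family_of_coords v k).
Proof.
move=> a j; split.
  rewrite (_ : (fun v => _) = (fun v : V => v 0 (lshift (m * m) (mxtens_index (a, k))))).
    exact: coord_continuous.
  by apply: funext => v; rewrite mxE.
rewrite (_ : (fun v => _) = (fun v : V => v 0 (rshift (m * m) (mxtens_index (a, k))))).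
  exact: coord_continuous.
by apply: funext => v; rewrite mxE.
Qed.

Lemma ccontinuous_inner k l :
  ccontinuous (fun v : V => (adjmx (family_of_coords v k) *m family_of_coords v l) 0 0).
Proof.
by apply: ccontinuous_mxM; [apply: ccontinuous_adjmx|]; apply: ccontinuous_family_of_coords.
Qed.

Lemma ccontinuous_measured_purity :
  ccontinuous (fun v : V => measured_purity rho (family_of_coords v)).
Proof.
have cP k : ccontinuous_mx (fun v : V => ptrace rho (proj (family_of_coords v k))).
  apply: ccontinuous_ptrace; apply: ccontinuous_mxM;
    [|apply: ccontinuous_adjmx]; exact: ccontinuous_family_of_coords.
by apply: ccontinuous_sum => k; apply: ccontinuous_mxtrace; apply: ccontinuous_mxM.
Qed.

Definition cube : set V := [set v | forall r, `[-1, 1]%classic (v ord0 r)].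
Definition onb_coords : set V := [set v | orthonormal_basis (family_of_coords v)].

Lemma compact_cube : compact cube.
Proof.
exact: (@rV_compact _ _ (fun=> `[-1, 1]%classic : set R) (fun=> @segment_compact R (-1) 1)).
Qed.

Lemma closed_onb_coords : closed onb_coords.
Proof.
pose inner v (kl : 'I_m * 'I_m) :=
  (adjmx (family_of_coords v kl.1) *m family_of_coords v kl.2) 0 0.
have -> : onb_coords = \bigcap_(kl in [set: 'I_m * 'I_m])
   ((fun v => Re (inner v kl)) @^-1` [set (kl.1 == kl.2)%:R]
    `&` (fun v => Im (inner v kl)) @^-1` [set 0]).
  apply/seteqP; split=> [v onb [k l] _ /=|v h k l].
    by rewrite /inner onb Re_natr Im_natr.
  have [/= Re_kl Im_kl] := h (k, l) I.
  apply/eqP; rewrite eq_complex Re_natr Im_natr.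
  by rewrite /inner in Re_kl Im_kl; rewrite Re_kl Im_kl !eqxx.
apply: closed_bigI => kl _; apply: closedI; apply: preimage_closed => [v _|];
  try exact: closed_eq; by case: (ccontinuous_inner kl.1 kl.2).
Qed.

Lemma onb_coords_cube e : orthonormal_basis e -> cube (coords_of_family e).
Proof.
move=> oe r; rewrite /= in_itv /=.
have entry_norm k a : Re (e k a 0) ^+ 2 + Im (e k a 0) ^+ 2 <= 1.
  have := oe k k; rewrite eqxx mxE => /(congr1 (@Re R)).
  rewrite (big_morph _ (@ReD R) (erefl : Re (0 : R[i]) = 0)) Re_natr /= mulr1n => <-.
  rewrite (bigD1 a) //= adjmxE ReM ReJ ImJ mulNr opprK -!expr2 lerDl.
  by apply: sumr_ge0 => b _; rewrite adjmxE ReM ReJ ImJ mulNr opprK -!expr2 addr_ge0 ?sqr_ge0.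
case: (split_ordP r) => j ->; rewrite /coords_of_family ?row_mxEl ?row_mxEr !mxE;
  have := entry_norm (mxtens_unindex j).2 (mxtens_unindex j).1;
  set x := Re _; set y := Im _ => h; apply/andP; split; nra.
Qed.

Lemma measured_purity_max : Defs.hermitian rho ->
  exists2 e0, orthonormal_basis e0 &
    forall e, orthonormal_basis e -> measured_purity rho e <= measured_purity rho e0.
Proof.
move=> hrho.
have inS e : orthonormal_basis e -> (cube `&` onb_coords) (coords_of_family e).
  move=> oe; split; first exact: onb_coords_cube.
  by move=> k l; rewrite !coords_of_familyK.
have [v0 S_v0 v0_max] := EVT_max_rV (ex_intro _ _ (inS _ (@onb_delta _ m)))
  (compact_closedI compact_cube closed_onb_coords)
  (continuous_subspaceT (proj1 ccontinuous_measured_purity)).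
exists (family_of_coords v0) => [|e oe]; first by move: S_v0; rewrite inE => -[].
have := v0_max (coords_of_family e); rewrite inE => /(_ (inS e oe)).
have Im_purity e' : Im (measured_purity rho e') = 0.
  apply/ger0_Im/sumr_ge0 => k _; apply: mxtrace_sqr_herm_ge0.
  by apply: hermitian_ptrace => //; apply: hermitian_proj.
rewrite (_ : family_of_coords _ = e) => [le_Re|]; last first.
  by apply: funext => k; rewrite coords_of_familyK.
by rewrite lecE !Im_purity eqxx le_Re.
Qed.

End MaximalPurity.
End CompactOrthonormalBases.

Theorem mainTheorem6 (R : realType) (m n : nat)
    (lA : 'I_(m ^ 2 - 1) -> 'M[R[i]]_m) (lB : 'I_(n ^ 2 - 1) -> 'M[R[i]]_n)
    (rho : 'M[R[i]]_(m * n)) :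
  su_generators lA -> su_generators lB -> state rho ->
  let G := Gmx lA lB rho in
  exists (chi0 : 'M[R[i]]_(m * n)) (e0 : 'I_m -> 'cV[R[i]]_m)
         (alpha0 : 'I_m -> 'cV[R[i]]_(m ^ 2 - 1)),
    [/\ zero_discord chi0,
        (forall chi, zero_discord chi -> hs_dist2 rho chi0 <= hs_dist2 rho chi),
        orthonormal_basis e0 /\ (forall k, coherence_vector lA (proj (e0 k)) (alpha0 k)),
        (forall (e : 'I_m -> 'cV[R[i]]_m) (alpha : 'I_m -> 'cV[R[i]]_(m ^ 2 - 1)),
            orthonormal_basis e -> (forall k, coherence_vector lA (proj (e k)) (alpha k)) ->
            basis_score G alpha <= basis_score G alpha0) &
        hs_dist2 rho chi0
          = 2 / ((m ^ 2 * n)%:R) * (\tr G - basis_score G alpha0)].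
Proof.
move=> sA sB st G; have [hrho _ _] := st.
have /andP[m_gt0 n_gt0] : (0 < m)%N && (0 < n)%N by rewrite -muln_gt0 (state_dim_gt0 st).
have [e0 onb0 e0_max] := CompactOrthonormalBases.measured_purity_max hrho.
pose alpha0 k := \col_i (m%:R / 2 * \tr (lA i *m proj (e0 k))).
have coh0 k : coherence_vector lA (proj (e0 k)) (alpha0 k).
  by apply: coherence_vector_herm => //; [exact: hermitian_proj | exact: mxtrace_proj_onb].
have [chi0 zd0 dist0] := zero_discord_attains n_gt0 st onb0.
exists chi0, e0, alpha0; split => //.
- move=> chi /(hs_dist2_zero_discord_ge hrho) [e onb_e le_e].
  by apply: le_trans le_e; rewrite dist0 lerB // e0_max.
- move=> e alpha onb_e coh.
  by rewrite (ler_basis_score rho m_gt0 n_gt0 sA sB onb_e coh onb0 coh0) e0_max.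
- by rewrite dist0 (measured_purity_score rho m_gt0 n_gt0 sA sB onb0 coh0).
Qed.
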